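(* Let $(\mathcal T,d)$ be a metric space, $f:\mathcal X^n\to\mathcal T$, $\ell:\mathbb R_+\to\mathbb R_+$ non-decreasing, $L(s,t)=\ell(d(s,t))$, and $\varepsilon>0$. If $M$ is an $\varepsilon$-differentially private mechanism with values in $\mathcal T$, then for every integer $k\ge1$, $$\sup_{x\in\mathcal X^n}\mathbb E[L(M(x),f(x))]\ge \sup_{x\in\mathcal X^n}\frac{\ell(\omega_f(x;k)/2)}{e^{k\varepsilon}+1}.$$ If $M$ is additionally $L$-unbiased, then for every $x\in\mathcal X^n$ and every integer $k\ge1$, $$\mathbb E[L(M(x),f(x))]\ge \frac{\ell(\omega_f(x;k)/2)}{e^{2k\varepsilon}+1}.$$
   Context: For $x,x'\in\mathcal X^n$, $d_H(x,x')=|\{i:x_i\neq x_i'\}|$ is the Hamming distance; $x,x'$ are neighboring if $d_H(x,x')\le 1$. A mechanism $M$ is $\varepsilon$-differentially private if for all neighboring $x,x'$ and all measurable $S$, $\mathbb P(M(x)\in S)\le e^{\varepsilon}\mathbb P(M(x')\in S)$. The local modulus of continuity is $\omega_f(x;k)=\sup\{d(f(x),f(x')):x'\in\mathcal X^n,\ d_H(x,x')\le k\}$ for real $k\ge0$. A mechanism $M$ is $L$-unbiased if $\mathbb E[L(M(x),f(x))]\le \mathbb E[L(M(x),t)]$ for all $x\in\mathcal X^n$, $t\in\mathcal T$. *)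

From HB Require Import structures.
From mathcomp Require Import all_boot all_order all_algebra.
From mathcomp Require Import all_classical all_reals all_analysis.
Set Implicit Arguments. Unset Strict Implicit. Unset Printing Implicit Defensive.
Import Order.TTheory GRing.Theory Num.Theory.
Local Open Scope classical_set_scope.
Local Open Scope ring_scope.

Definition is_metric (R : realType) (T : Type) (d : T -> T -> R) : Prop :=
  (forall s t, 0 <= d s t) /\
  (forall s t, d s t = 0 <-> s = t) /\
  (forall s t, d s t = d t s) /\
  (forall r s t, d r t <= d r s + d s t).

Definition hamming (X : Type) (n : nat) (x x' : 'I_n -> X) : nat :=
  #|[set i : 'I_n | `[< x i <> x' i >]]|%N.

Definition neighboring (X : Type) (n : nat) (x x' : 'I_n -> X) : Prop :=
  (hamming x x' <= 1)%N.

(* A mechanism is given by the law of M(x) for each dataset x. *)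
Definition diff_private (R : realType) (X : Type) (n : nat)
  (dT : measure_display) (T : measurableType dT)
  (M : ('I_n -> X) -> probability T R) (eps : R) : Prop :=
  forall x x', neighboring x x' ->
    forall S : set T, measurable S ->
      (M x S <= (expR eps)%:E * M x' S)%E.

Definition local_modulus (R : realType) (X T : Type) (n : nat)
  (d : T -> T -> R) (f : ('I_n -> X) -> T) (x : 'I_n -> X) (k : R) : \bar R :=
  ereal_sup [set (d (f x) (f x'))%:E | x' in [set x' | (hamming x x')%:R <= k]].

(* extension of l : R_+ -> R_+ to [0, +oo]: l(+oo) = sup l *)
Definition ext_loss (R : realType) (l : R -> R) (r : \bar R) : \bar R :=
  match r with
  | r%:E => (l r)%:E
  | +oo%E => ereal_sup [set (l s)%:E | s in [set s : R | 0 <= s]]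
  | -oo%E => 0%E
  end.

Definition exp_loss (R : realType) (X : Type) (n : nat)
  (dT : measure_display) (T : measurableType dT)
  (M : ('I_n -> X) -> probability T R) (d : T -> T -> R) (l : R -> R)
  (x : 'I_n -> X) (t : T) : \bar R :=
  (\int[M x]_s (l (d s t))%:E)%E.

Definition L_unbiased (R : realType) (X : Type) (n : nat)
  (dT : measure_display) (T : measurableType dT)
  (M : ('I_n -> X) -> probability T R) (d : T -> T -> R) (l : R -> R)
  (f : ('I_n -> X) -> T) : Prop :=
  forall x t, (exp_loss M d l x (f x) <= exp_loss M d l x t)%E.

From HB Require Import structures.
From mathcomp Require Import all_boot all_order all_algebra.
From mathcomp Require Import all_classical all_reals all_analysis.
From mathcomp Require Import measurable_realfun.
From mathcomp Require Import ring lra.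
Set Implicit Arguments. Unset Strict Implicit. Unset Printing Implicit Defensive.
Import Order.TTheory GRing.Theory Num.Theory.
Local Open Scope classical_set_scope.
Local Open Scope ring_scope.

(* Fix x and a >= 0 with 2a <= omega_f(x;k).  Datasets x' in the k-neighbourhood
   of x have d(f x, f x') arbitrarily close to 2a; for such x' every outcome s
   either has loss >= l(a) against f x, or against f x', or lies in the "gap"
   where both distances are < a, and this gap has vanishing probability
   (continuity of measures from above).  Markov's inequality on the two level
   sets together with group privacy (M(x) <= e^{k eps} M(x') on events) give
     l(a) <= E[L(M x, f x)] + e^{k eps} E[L(M x', f x')] + l(a) delta,
   and letting delta -> 0 bounds l(a), hence l(omega_f(x;k)/2).  The minimax
   bound follows by bounding both risks by their supremum; for an unbiased
   mechanism the risk at x' is at most its risk at f x, which group privacy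
   bounds by e^{k eps} times the risk at x. *)

Lemma hamming_sym (X : Type) n (x x' : 'I_n -> X) : hamming x x' = hamming x' x.
Proof.
rewrite /hamming; apply: eq_card => i.
by apply/idP/idP => /set_mem /asboolP neq; apply/mem_set/asboolP => /esym.
Qed.

Lemma hamming_refl (X : Type) n (x : 'I_n -> X) : hamming x x = 0%N.
Proof. by apply: eq_card0 => i; apply/negbTE/negP => /set_mem /asboolP; apply. Qed.

Lemma hamming_eq0 (X : Type) n (x x' : 'I_n -> X) : hamming x x' = 0%N -> x = x'.
Proof.
move=> /card0_eq diff0; apply: funext => i; apply: contrapT => neq.
have : i \in [set j | `[< x j <> x' j >]] by apply/mem_set/asboolP.
by rewrite diff0.
Qed.

(* Changing one coordinate where x and x' differ moves x one step towards x'. *)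
Lemma hamming_step (X : Type) n (x x' : 'I_n -> X) m : hamming x x' = m.+1 ->
  exists y, neighboring x y /\ hamming y x' = m.
Proof.
rewrite /hamming; set D := [set i | _] => card_D.
have [i Di] : exists i, i \in D by apply/card_gt0P; rewrite card_D.
exists (fun j => if j == i then x' i else x j); split.
  rewrite /neighboring /hamming -(card1 i); apply: subset_leq_card.
  apply/fintype.subsetP => j /set_mem /asboolP; case: eqP => [->|_ []//].
  by rewrite inE.
rewrite (cardD1 i) Di add1n in card_D; case: card_D => <-.
apply: eq_card => j; rewrite !inE; have [->|ji] /= := eqVneq j i.
  by apply/negbTE/negP => /set_mem /asboolP; rewrite eqxx; apply.
by apply/idP/idP => /set_mem /asboolP neq; apply/mem_set/asboolP; move: neq;
  rewrite (negbTE ji).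
Qed.

(* Group privacy: an eps-DP mechanism is (m eps)-DP for datasets at Hamming
   distance at most m, by induction along a path of neighbouring datasets. *)
Lemma group_privacy (R : realType) (X : Type) n (dT : measure_display)
  (T : measurableType dT) (M : ('I_n -> X) -> probability T R) eps :
  0 <= eps -> diff_private M eps ->
  forall m x x' (S : set T), measurable S -> (hamming x x' <= m)%N ->
  (M x S <= (expR (m%:R * eps))%:E * M x' S)%E.
Proof.
move=> eps0 dp; elim=> [|m IH] x x' S mS.
  by rewrite leqn0 => /eqP /hamming_eq0 ->; rewrite mul0r expR0 mul1e.
case hxx': (hamming x x') => [|h] hm.
  rewrite (hamming_eq0 hxx'); apply: lee_pemull; first exact: measure_ge0.
  by rewrite lee_fin -expR0 ler_expR mulr_ge0.
have [y [xy yx']] := hamming_step hxx'.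
apply: (le_trans (dp x y xy S mS)).
rewrite -addn1 natrD mulrDl mul1r addrC expRD EFinM -muleA.
by apply: lee_wpmul2l; [rewrite lee_fin expR_ge0|apply: IH; rewrite ?yx'].
Qed.

Lemma integral_le_of_measure_le (R : realType) (dT : measure_display)
  (T : measurableType dT) (P Q : {measure set T -> \bar R}) (c : R) (g : T -> R) :
  0 <= c -> (forall S, measurable S -> (P S <= c%:E * Q S)%E) ->
  measurable_fun setT g -> (forall s, 0 <= g s) ->
  (\int[P]_s (g s)%:E <= c%:E * \int[Q]_s (g s)%:E)%E.
Proof.
move=> c0 PQ mg g0.
have mEg : measurable_fun setT (fun s => (g s)%:E) by exact/measurable_EFinP.
rewrite -(ge0_integral_mscale Q measurableT (NngNum c0)) //; last first.
  by move=> s _; rewrite lee_fin.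
by apply: (ge0_le_measure_integral (m2 := mscale (NngNum c0) Q)) => // s;
  rewrite lee_fin.
Qed.

Lemma local_modulus_approx (R : realType) (X T : Type) n (d : T -> T -> R)
  (f : ('I_n -> X) -> T) x (k a : R) :
  ((2 * a)%:E <= local_modulus d f x k)%E ->
  exists xs : nat -> 'I_n -> X, forall j,
    (hamming x (xs j))%:R <= k /\ 2 * a - j.+1%:R^-1 < d (f x) (f (xs j)).
Proof.
move=> a_le; suff near_sup j : exists x', (hamming x x')%:R <= k /\
    2 * a - j.+1%:R^-1 < d (f x) (f x')
  by have [xs xs_far] := choice near_sup; exists xs.
have : ((2 * a - j.+1%:R^-1)%:E < local_modulus d f x k)%E.
  by apply: lt_le_trans a_le; rewrite lte_fin ltrBlDr ltrDl invr_gt0 ltr0Sn.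
by case/ereal_sup_gt => _ [x' x'k <-]; rewrite lte_fin => far; exists x'.
Qed.

(* The modulus is nonnegative since x' = x is admissible. *)
Lemma local_modulus_ge0 (R : realType) (X T : Type) n (d : T -> T -> R)
  (f : ('I_n -> X) -> T) x (k : R) :
  is_metric d -> 0 <= k -> (0 <= local_modulus d f x k)%E.
Proof.
case=> d_ge0 _ k0; apply: (@le_trans _ _ (d (f x) (f x))%:E); first by rewrite lee_fin.
by apply: ereal_sup_ubound; exists x => //=; rewrite hamming_refl.
Qed.

Lemma ext_loss_half_le (R : realType) (l : R -> R) (w : \bar R) (v c : R) :
  0 < c -> (0 <= w)%E ->
  (forall a, 0 <= a -> ((2 * a)%:E <= w)%E -> l a <= v * c) ->
  (ext_loss l (w * 2^-1%:E) * (c^-1)%:E <= v%:E)%E.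
Proof.
move=> c0; case: w => [w| |] w0 la_le.
- rewrite -!EFinM /= lee_fin ler_pdivrMr //; apply: la_le.
    by rewrite mulr_ge0 // ?invr_ge0 // -lee_fin.
  by rewrite mulrC mulfVK // pnatr_eq0.
- rewrite mulyr gtr0_sg ?invr_gt0 // mul1e /=.
  apply: (@le_trans _ _ ((v * c)%:E * (c^-1)%:E)%E).
    apply: lee_wpmul2r; first by rewrite lee_fin invr_ge0 ltW.
    by apply: ge_ereal_sup => _ [s s0 <-]; rewrite lee_fin la_le // leey.
  by rewrite -EFinM mulfK // gt_eqF.
- by move: w0; rewrite leNgt ltNye.
Qed.

Section LowerBounds.
Variables (R : realType) (dT : measure_display) (T : measurableType dT)
  (d : T -> T -> R) (l : R -> R).
Hypotheses (d_metric : is_metric d) (l_ge0 : forall r, 0 <= r -> 0 <= l r)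
  (l_mono : forall r s, 0 <= r -> r <= s -> l r <= l s)
  (loss_meas : forall t, measurable_fun setT (fun s => l (d s t))).

Definition level_set (t : T) (a : R) : set T := [set s | l a <= l (d s t)].

Lemma measurable_level_set t a : measurable (level_set t a).
Proof.
have := loss_meas t measurableT (measurable_itv `[l a, +oo[); rewrite setTI.
congr measurable; apply/seteqP; split => s /=; rewrite /level_set /= in_itv /= andbT //.
Qed.

Lemma notin_level_set t a s : 0 <= a -> ~ level_set t a s -> d s t < a.
Proof. by move=> a0 nlev; rewrite ltNge; apply/negP => /(l_mono a0). Qed.

Lemma level_set_markov (mu : {measure set T -> \bar R}) t a : 0 <= a ->
  ((l a)%:E * mu (level_set t a) <= \int[mu]_s (l (d s t))%:E)%E.
Proof.
move=> a0; have mlev := measurable_level_set t a.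
rewrite -(setIT (level_set t a)) -integral_indic //.
rewrite -(integralZl_indic measurableT (fun=> level_set t a)) //; last first.
  by rewrite ltNge l_ge0.
apply: ge0_le_integral => //.
- by move=> s _; rewrite lee_fin mulr_ge0 ?l_ge0.
- by apply/measurable_EFinP; apply: measurable_funM => //; exact: measurable_indic.
- by apply/measurable_EFinP; exact: loss_meas.
move=> s _; rewrite lee_fin indicE.
have [/set_mem|_] := boolP (s \in _); first by rewrite mulr1.
by rewrite mulr0 l_ge0 //; case: d_metric.
Qed.

Definition level_gap (t t' : T) (a : R) : set T :=
  ~` level_set t a `&` ~` level_set t' a.

Lemma measurable_level_gap t t' a : measurable (level_gap t t' a).
Proof. by apply: measurableI; apply: measurableC; exact: measurable_level_set. Qed.

(* If the points u j approach distance 2a from t, then the gaps between the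
   level sets of t and of u j have vanishing probability along a subsequence:
   a point in all the tails of the gaps would be at distance < a from t and from
   points u j arbitrarily close to distance 2a from t. *)
Lemma vanishing_level_gap (P : probability T R) t (u : nat -> T) a δ :
  0 <= a -> 0 < δ -> (forall j, 2 * a - j.+1%:R^-1 < d t (u j)) ->
  exists j, (P (level_gap t (u j) a) <= δ%:E)%E.
Proof.
move=> a0 δ0 u_far.
pose tail j := \bigcup_(i in [set i | (j <= i)%N]) level_gap t (u i) a.
have tail_meas j : measurable (tail j).
  by apply: bigcup_measurable => i _; exact: measurable_level_gap.
have tail_nonincr : {homo tail : i j / (i <= j)%N >-> (j <= i)%O}.
  move=> i j ij; rewrite subsetEset => s [m /= jm gap_m]; exists m => //.
  exact: leq_trans ij jm.
have tail_empty : \bigcap_j tail j = set0.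
  apply/seteqP; split => // s tail_s.
  have [i _ [/(notin_level_set a0) near_t _]] := tail_s 0%N I.
  pose g := a - d s t.
  have g0 : 0 < g by rewrite subr_gt0.
  have [N gN] : exists N : nat, N.+1%:R^-1 < g.
    exists (Num.truncn g^-1).
    rewrite -[X in _ < X]invrK ltf_pV2 ?posrE ?ltr0Sn ?invr_gt0 //.
    exact: truncnS_gt.
  have [j /= Nj [_ /(notin_level_set a0) near_uj]] := tail_s N I.
  have jg : j.+1%:R^-1 < g.
    by apply: le_lt_trans gN; rewrite lef_pV2 ?posrE ?ltr0Sn // ler_nat ltnS.
  case: d_metric => _ [_ [d_sym d_tri]].
  have := d_tri t s (u j); rewrite [d t s]d_sym => tri.
  exfalso; move: (u_far j) jg; rewrite /g; move: (j.+1%:R^-1) => ij; lra.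
have := nonincreasing_cvg_mu
  (le_lt_trans (probability_le1 P (tail_meas 0%N)) (ltry _)) tail_meas
  (ltac:(rewrite tail_empty; exact: measurable0)) tail_nonincr.
rewrite tail_empty measure0 => /fine_cvgP [_ /cvgr_lt /(_ _ δ0) /filter_ex [N /= tailN]].
exists N; apply: (le_trans (le_measure _ _ _ _)).
- exact/mem_set/measurable_level_gap.
- exact/mem_set/tail_meas.
- by move=> s gap_s; exists N => /=.
by rewrite -(fineK (fin_num_measure P _ (tail_meas N))) lee_fin ltW.
Qed.

(* Two-point bound: every outcome lies in the level set of t, in that of t', or
   in their gap; bounding the first two by Markov's inequality (transporting the
   second from P to Q) gives l(a) <= E_P[L(., t)] + c E_Q[L(., t')] + l(a) δ. *)
Lemma two_point_bound (P Q : probability T R) (c : R) t t' a δ :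
  0 <= a -> 0 <= c -> (forall S, measurable S -> (P S <= c%:E * Q S)%E) ->
  (P (level_gap t t' a) <= δ%:E)%E ->
  ((l a)%:E <= \int[P]_s (l (d s t))%:E + c%:E * \int[Q]_s (l (d s t'))%:E
               + (l a * δ)%:E)%E.
Proof.
move=> a0 c0 PQ gap_small.
have la0 : (0 <= (l a)%:E)%E by rewrite lee_fin l_ge0.
set A := level_set t a; set B := level_set t' a; set G := level_gap t t' a.
have mA : measurable A := measurable_level_set t a.
have mB : measurable B := measurable_level_set t' a.
have cover : (1 <= P A + P B + P G)%E.
  have ABG : A `|` B `|` G = setT.
    apply/seteqP; split => // s _.
    have [|nA] := pselect (A s); first by left; left.
    by have [|nB] := pselect (B s); [left; right|right].
  rewrite -(probability_setT P) -ABG.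
  apply: le_trans; first exact/measureU2/measurable_level_gap/measurableU.
  by rewrite leeD2r // measureU2.
have markov_B : ((l a)%:E * P B <= c%:E * \int[Q]_s (l (d s t'))%:E)%E.
  apply: le_trans (lee_wpmul2l la0 (PQ B mB)) _.
  by rewrite muleCA; apply: lee_wpmul2l; [rewrite lee_fin|exact: level_set_markov].
have gap_term : ((l a)%:E * P G <= (l a * δ)%:E)%E.
  by rewrite EFinM; exact: lee_wpmul2l.
apply: (@le_trans _ _ ((l a)%:E * (P A + P B + P G))%E).
  by rewrite -[X in (X <= _)%E]mule1 lee_wpmul2l.
rewrite ge0_muleDr ?adde_ge0 // ge0_muleDr //.
by apply: (leeD (leeD (level_set_markov _ _ a0) markov_B) gap_term).
Qed.

Variables (X : Type) (n : nat) (f : ('I_n -> X) -> T)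
  (M : ('I_n -> X) -> probability T R) (eps : R).
Hypotheses (eps_ge0 : 0 <= eps) (dp : diff_private M eps).

Lemma exp_loss_ge0 x t : (0 <= exp_loss M d l x t)%E.
Proof. by apply: integral_ge0 => s _; rewrite lee_fin l_ge0 //; case: d_metric. Qed.

Lemma local_two_point x (k : nat) a δ : 0 <= a -> 0 < δ ->
  ((2 * a)%:E <= local_modulus d f x k%:R)%E ->
  exists x', (hamming x x' <= k)%N /\
    ((l a)%:E <= exp_loss M d l x (f x)
       + (expR (k%:R * eps))%:E * exp_loss M d l x' (f x') + (l a * δ)%:E)%E.
Proof.
move=> a0 δ0 /local_modulus_approx [xs xs_near].
have [j gap_j] := vanishing_level_gap (M x) a0 δ0 (fun j => (xs_near j).2).
have xs_k : (hamming x (xs j) <= k)%N by rewrite -(ler_nat R); exact: (xs_near j).1.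
exists (xs j); split => //.
by apply: two_point_bound => // S mS; exact: group_privacy.
Qed.

(* Letting δ tend to 0: l(a) lies below every real bound on
   E[L(M(x), f x)] + e^{k eps} E[L(M(x'), f x')] over the k-neighbourhood of x. *)
Lemma loss_le_neighbourhood_bound x (k : nat) a (b : R) : 0 <= a ->
  ((2 * a)%:E <= local_modulus d f x k%:R)%E ->
  (forall x', (hamming x x' <= k)%N ->
     (exp_loss M d l x (f x)
        + (expR (k%:R * eps))%:E * exp_loss M d l x' (f x') <= b%:E)%E) ->
  l a <= b.
Proof.
move=> a0 a_le bound; apply/ler_addgt0Pr => η η0.
have la1 : 0 < l a + 1 by rewrite ltr_wpDl ?l_ge0.
have [x' [x'k la_le]] := local_two_point a0 (divr_gt0 η0 la1) a_le.
have small : l a * (η / (l a + 1)) <= η.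
  by rewrite mulrCA ger_pMr // ler_pdivrMr // mul1r lerDl.
rewrite -lee_fin EFinD; apply: (le_trans la_le); apply: leeD; first exact: bound.
by rewrite lee_fin.
Qed.

Lemma worst_case_lower_bound x (k : nat) (v : R) :
  (forall x', (exp_loss M d l x' (f x') <= v%:E)%E) ->
  (ext_loss l (local_modulus d f x k%:R * 2^-1%:E)
     * ((expR (k%:R * eps) + 1)^-1)%:E <= v%:E)%E.
Proof.
move=> risk_le; set e := expR (k%:R * eps).
apply: ext_loss_half_le; [by rewrite ltr_wpDl ?expR_ge0|exact: local_modulus_ge0|].
move=> a a0 a_le; apply: (loss_le_neighbourhood_bound a0 a_le) => x' _.
rewrite (_ : v * (e + 1) = v + e * v); last by ring.
rewrite EFinD EFinM; apply: leeD (risk_le x) (lee_wpmul2l _ (risk_le x')).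
by rewrite lee_fin expR_ge0.
Qed.

(* Unbiased mechanisms: the risk at x' is at most its risk at the target f x,
   which group privacy bounds by e^{k eps} times the risk r at x; hence
   l(omega_f(x;k)/2) <= r (e^{2 k eps} + 1). *)
Lemma unbiased_lower_bound x (k : nat) (r : R) : L_unbiased M d l f ->
  exp_loss M d l x (f x) = r%:E ->
  (ext_loss l (local_modulus d f x k%:R * 2^-1%:E)
     * ((expR (2 * k%:R * eps) + 1)^-1)%:E <= r%:E)%E.
Proof.
move=> unbiased r_eq; set e := expR (k%:R * eps).
have e2 : expR (2 * k%:R * eps) = e * e by rewrite -expRD; congr expR; ring.
apply: ext_loss_half_le; [by rewrite ltr_wpDl ?expR_ge0|exact: local_modulus_ge0|].
move=> a a0 a_le; apply: (loss_le_neighbourhood_bound a0 a_le) => x' x'k.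
have transfer : (exp_loss M d l x' (f x) <= e%:E * r%:E)%E.
  rewrite -r_eq; apply: integral_le_of_measure_le => //; first exact: expR_ge0.
    by move=> S mS; apply: group_privacy => //; rewrite hamming_sym.
  by move=> s; rewrite l_ge0 //; case: d_metric.
rewrite r_eq e2 (_ : r * (e * e + 1) = r + e * (e * r)); last by ring.
rewrite EFinD EFinM; apply: leeD => //; apply: lee_wpmul2l; first by rewrite lee_fin expR_ge0.
by rewrite EFinM; exact: le_trans (unbiased x' (f x)) transfer.
Qed.

End LowerBounds.

Lemma ge0_ereal_finite_bound (R : realType) (y z : \bar R) : (0 <= y)%E ->
  (forall r : R, y = r%:E -> (z <= r%:E)%E) -> (z <= y)%E.
Proof.
case: y => [r _ z_le| _ _ |]; first exact: z_le.
- exact: leey.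
- by rewrite leNgt ltNye.
Qed.

Theorem theorem1 (R : realType) (X : Type) (n : nat)
  (dT : measure_display) (T : measurableType dT)
  (d : T -> T -> R) (f : ('I_n -> X) -> T) (l : R -> R) (eps : R)
  (M : ('I_n -> X) -> probability T R) :
  is_metric d ->
  (forall r, 0 <= r -> 0 <= l r) ->
  (forall r s, 0 <= r -> r <= s -> l r <= l s) ->
  (forall t, measurable_fun setT (fun s => l (d s t))) ->
  0 < eps ->
  diff_private M eps ->
  (forall k : nat, (1 <= k)%N ->
     (ereal_sup [set exp_loss M d l x (f x) | x in setT] >=
      ereal_sup [set ext_loss l (local_modulus d f x k%:R * 2^-1%:E)
                      * ((expR (k%:R * eps) + 1)^-1)%:E | x in setT])%E) /\
  (L_unbiased M d l f ->
   forall (x : 'I_n -> X) (k : nat), (1 <= k)%N ->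
     (exp_loss M d l x (f x) >=
      ext_loss l (local_modulus d f x k%:R * 2^-1%:E)
        * ((expR (2 * k%:R * eps) + 1)^-1)%:E)%E).
Proof.
move=> d_metric l_ge0 l_mono loss_meas /ltW eps_ge0 dp.
have risk_ge0 := exp_loss_ge0 d_metric l_ge0 M.
split=> [k _ | unbiased x k _].
  apply: ge_ereal_sup => _ [x _ <-].
  have risk_le_sup x' : (exp_loss M d l x' (f x') <= ereal_sup
      [set exp_loss M d l x (f x) | x in setT])%E by apply: ereal_sup_ubound; exists x'.
  apply: ge0_ereal_finite_bound (le_trans (risk_ge0 x (f x)) (risk_le_sup x)) _.
  move=> v sup_v; apply: (worst_case_lower_bound d_metric l_ge0 l_mono loss_meas eps_ge0 dp).
  by move=> x'; rewrite -sup_v.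
apply: ge0_ereal_finite_bound (risk_ge0 x (f x)) _ => r r_eq.
exact: (unbiased_lower_bound d_metric l_ge0 l_mono loss_meas eps_ge0 dp).
Qed.
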